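(* Let $\sim$ (for each $N$) be an equivalence relation on $\{1,\dots,N\}^2$ with $(p,q)\sim(q,p)$ satisfying conditions (C2) and (C3). Let $k\ge 4$ be even, $\pi\in\mathcal B_{k/2}$, and suppose $\{m,m+1\}\in\pi$ with $1\le m\le k-2$; let $\tilde\pi:=\pi\setminus^\bullet\{m,m+1\}\in\mathcal B_{k/2-1}$. Then, as $N\to\infty$, $$\#\overline{E}^{(N)}_k(\pi)\le N\cdot\#\overline{E}^{(N)}_{k-2}(\tilde\pi)+o\big(N^{1+k/2}\big).$$
   Context: Conditions on $\sim$ (as $N\to\infty$): (C2) $\max_{p,q,r}\#\{s:(p,q)\sim(r,s)\}\le B<\infty$ with $B$ independent of $N$; (C3) $\#\{(p,q,r)\in\{1,\dots,N\}^3:(p,q)\sim(q,r),\ r\neq p\}=o(N^2)$. A pair-partition of $\{1,\dots,k\}$ is a partition all of whose blocks have exactly two elements; it is crossing if there exist $1\le a<b<c<d\le k$ with $\{a,c\},\{b,d\}\in\pi$, and non-crossing otherwise. For even $k$, $\mathcal B_{k/2}$ denotes the set of non-crossing pair-partitions of $\{1,\dots,k\}$. For $k\ge 4$, $\pi\in\mathcal B_{k/2}$ and a block $\{m,m+1\}\in\pi$ with $1\le m\le k-2$, $\pi\setminus^\bullet\{m,m+1\}\in\mathcal B_{k/2-1}$ denotes the pair-partition of $\{1,\dots,k-2\}$ obtained by deleting the block $\{m,m+1\}$ and relabelling every remaining element $a>m$ as $a-2$. $\pi$-adopted sequences. Let $\mathcal G$ be a countable set and $\pi\in\mathcal B_{k/2}$.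 A sequence $g=(g_1,\dots,g_k)\in\mathcal G^k$ is $\pi$-adopted, defined recursively in $k$: for $k=2$ (so $\pi=\{\{1,2\}\}$), iff $g_1\neq g_2$; for $k\ge 4$, iff for every block of $\pi$ of the form $\{m,m+1\}$ with $1\le m\le k-2$: (a) $g_m=g_{m+2}$ and $g_{m+1}\neq g_s$ for all $s\neq m+1$; and (b) $(g_1,\dots,g_m,g_{m+3},\dots,g_k)$ is $\pi\setminus^\bullet\{m,m+1\}$-adopted. For a partition $\pi$ of $\{1,\dots,k\}$, $\mathcal E^{(N)}_k(\pi)$ is the set of $i=(i_1,\dots,i_k)\in\{1,\dots,N\}^k$ such that, with $i_{k+1}:=i_1$, for all $l,m$: $l,m$ lie in the same block of $\pi$ iff $(i_l,i_{l+1})\sim(i_m,i_{m+1})$. For $\pi\in\mathcal B_{k/2}$, $\overline{E}^{(N)}_k(\pi)$ is the set of those $i\in\mathcal E^{(N)}_k(\pi)$ which are not $\pi$-adopted (as sequences in $\mathcal G^k$ with $\mathcal G=\{1,\dots,N\}$). *)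

From HB Require Import structures.
From mathcomp Require Import all_boot all_order all_algebra.
Set Implicit Arguments. Unset Strict Implicit. Unset Printing Implicit Defensive.
Import Order.TTheory GRing.Theory Num.Theory.

(* Positions 1..k of the paper are represented 0-based by 'I_k, and the
   index set {1..N} by 'I_N (values 0..N-1). *)

Definition pair_partition (k : nat) (P : {set {set 'I_k}}) : bool :=
  partition P [set: 'I_k] && [forall B in P, #|B| == 2].

Definition crossing (k : nat) (P : {set {set 'I_k}}) : bool :=
  [exists a : 'I_k, exists b : 'I_k, exists c : 'I_k, exists d : 'I_k,
     [&& a < b, b < c, c < d, [set a; c] \in P & [set b; d] \in P]].

Definition NCpair (k : nat) (P : {set {set 'I_k}}) : bool :=
  pair_partition P && ~~ crossing P.

Definition blk (k m : nat) : {set 'I_k} := [set x : 'I_k | (val x == m) || (val x == m.+1)].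

(* relabelling: new position j of {0..k-3} corresponds to old position shift m j *)
Definition shift (m j : nat) : nat := if j < m then j else j.+2.

(* P \•{m,m+1}: delete the block {m,m+1} and relabel remaining a >= m+2 as a-2 *)
Definition delblock (k : nat) (P : {set {set 'I_k}}) (m : nat) : {set {set 'I_k.-2}} :=
  [set [set j : 'I_k.-2 | [exists x in B, val x == shift m j]] | B : {set 'I_k} in P & B != blk k m].

(* the sequence g with the entries at (0-based) positions m+1, m+2 removed *)
Definition drop2 (T : Type) (k : nat) (g : 'I_k.+2 -> T) (m : nat) (j : 'I_k) : T :=
  if j <= m then g (widen_ord (leq_trans (leqnSn k) (leqnSn k.+1)) j)
  else g (lift ord0 (lift ord0 j)).

Fixpoint adopted (T : eqType) (k : nat) : {set {set 'I_k}} -> ('I_k -> T) -> bool :=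
  match k return {set {set 'I_k}} -> ('I_k -> T) -> bool with
  | 0 => fun _ _ => false
  | 1 => fun _ _ => false
  | k1.+2 => fun P g =>
      if k1 is 0 then g ord0 != g ord_max
      else (* k >= 4 (or odd k >= 3, never used) *)
      [forall m : 'I_k1.+2,
         ((m.+2 < k1.+2) && (blk k1.+2 m \in P)) ==>
         [&& [exists m2 : 'I_k1.+2, (val m2 == m.+2) && (g m == g m2)],
             [forall m1 : 'I_k1.+2, (val m1 == m.+1) ==>
                [forall s : 'I_k1.+2, (s != m1) ==> (g m1 != g s)]]
           & @adopted T k1 (delblock P m) (@drop2 T k1 g m)]]
  end.

Definition Eset (sim : forall N : nat, rel ('I_N * 'I_N)) (N k : nat)
    (P : {set {set 'I_k}}) : {set {ffun 'I_k -> 'I_N}} :=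
  [set i : {ffun 'I_k -> 'I_N} | [forall l : 'I_k, forall m : 'I_k,
     [exists B in P, (l \in B) && (m \in B)] ==
     sim N (i l, i (ordS l)) (i m, i (ordS m))]].

Definition Ebar (sim : forall N : nat, rel ('I_N * 'I_N)) (N k : nat)
    (P : {set {set 'I_k}}) : {set {ffun 'I_k -> 'I_N}} :=
  [set i in Eset sim N P | ~~ adopted P (fun l => i l)].

Definition littleo (f g : nat -> rat) : Prop :=
  forall eps : rat, (0 < eps)%R -> exists N0 : nat, forall N : nat, N0 <= N ->
    (`|f N| <= eps * g N)%R.

From HB Require Import structures.
From mathcomp Require Import all_boot all_order all_algebra zify ring lra.
From Stdlib Require Import FunctionalExtensionality.
Import Order.TTheory GRing.Theory Num.Theory.

Set Implicit Arguments.
Unset Strict Implicit.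
Unset Printing Implicit Defensive.

(* Let i be a non-adopted sequence in E_k(pi).  Either (1) the value i_{m+1} occurs
   again in i, or (2) i_m <> i_{m+2}, or (3) condition (a) holds at {m, m+1}; then
   deleting i_{m+1}, i_{m+2} gives a sequence of E_{k-2}(pi~) which cannot be
   pi~-adopted, since adoptedness would lift back to i.  Case (3) injects into
   Ebar_{k-2}(pi~) x {1..N}.  Cases (1) and (2) are counted by reading i cyclically
   from position m+2: an entry has N possible values only when the edge leading to it
   opens a new block of pi, which happens at most k/2 - 1 times, and at most B values
   otherwise by (C2).  In case (1) the last entry i_{m+1} repeats one of k positions,
   in case (2) the first and last entries come from a triple counted by (C3).  This
   gives O(N^{k/2}) + o(N^2) O(N^{k/2-1}) = o(N^{1+k/2}). *)

Lemma trivIset_block_eq (T : finType) (P : {set {set T}}) (A B : {set T}) x :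
  trivIset P -> A \in P -> B \in P -> x \in A -> x \in B -> A = B.
Proof. by move=> tP AP BP xA xB; rewrite -(def_pblock tP AP xA) (def_pblock tP BP xB). Qed.

Section BlockDeletion.
Variable k : nat.
Implicit Types (P : {set {set 'I_k}}) (B : {set 'I_k}) (m x : nat).

Lemma shift_lt m (j : 'I_k.-2) : shift m j < k.
Proof. by have := ltn_ord j; rewrite /shift; case: ifP => _; lia. Qed.

Definition relabel m (j : 'I_k.-2) : 'I_k := Ordinal (shift_lt m j).

Lemma delblockE P m :
  delblock P m = [set relabel m @^-1: B | B : {set 'I_k} in P & B != blk k m].
Proof.
apply: eq_imset => B; apply/setP => j; rewrite !inE.
apply/existsP/idP => [[y /andP [yB /eqP e]] | jB].
  by have -> : relabel m j = y by apply: val_inj; rewrite /= -e.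
by exists (relabel m j); rewrite jB eqxx.
Qed.

Lemma delblockP P m C :
  reflect (exists2 B, (B \in P) && (B != blk k m) & C = relabel m @^-1: B)
          (C \in delblock P m).
Proof.
rewrite delblockE; apply: (iffP imsetP) => [[B] | [B]]; rewrite ?inE => BP ->.
  by exists B.
by exists B; rewrite ?inE.
Qed.

Lemma trivIset_delblock P m : trivIset P -> trivIset (delblock P m).
Proof.
move=> /trivIsetP tP; apply/trivIsetP => C1 C2.
move=> /delblockP [B1 /andP [B1P _] ->] /delblockP [B2 /andP [B2P _] ->] neC.
have /tP dB : B1 != B2 by apply: contraNneq neC => ->.
move: (dB B1P B2P); rewrite -!setI_eq0 -preimsetI => /eqP ->.
by rewrite preimset0.
Qed.

Definition unshift m x := if x < m then x else x - 2.

Lemma blk_apart P m x : trivIset P -> m.+2 < k -> x.+2 < k ->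
  blk k m \in P -> blk k x \in P -> x != m -> (x.+1 < m) || (m.+1 < x).
Proof.
move=> tP hm hx bm bx neq.
have not_adj a : a.+2 < k -> blk k a \in P -> blk k a.+1 \in P -> False.
  move=> ha ba ba1.
  have e : blk k a = blk k a.+1.
    by apply: (trivIset_block_eq (x := Ordinal (ltnW ha)) tP); rewrite ?inE ?eqxx ?orbT.
  have : Ordinal (ltnW (ltnW ha)) \in blk k a by rewrite inE eqxx.
  by rewrite e inE /=; lia.
case: (ltngtP x m) => h; last by rewrite h eqxx in neq.
  case: (eqVneq x.+1 m) => [e | ne]; last lia.
  by case: (not_adj x) => //; rewrite e.
case: (eqVneq m.+1 x) => [e | ne]; last lia.
by case: (not_adj m) => //; rewrite e.
Qed.

Lemma preimset_relabel_blk m x : x.+2 < k -> (x.+1 < m) || (m.+1 < x) ->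
  relabel m @^-1: blk k x = blk k.-2 (unshift m x).
Proof.
move=> hx sep; apply/setP => j; rewrite !inE /= /shift /unshift.
by have := ltn_ord j; case: ifP => h1; case: ifP => h2 hj; apply/idP/idP; lia.
Qed.

Lemma blk_delblock P m x : m.+1 < k -> x.+2 < k -> (x.+1 < m) || (m.+1 < x) ->
  blk k x \in P -> blk k.-2 (unshift m x) \in delblock P m.
Proof.
move=> hm hx sep bx; apply/delblockP; exists (blk k x); last first.
  by rewrite preimset_relabel_blk.
rewrite bx /=; apply/eqP => e.
have : Ordinal (ltnW hm) \in blk k x by rewrite e inE eqxx.
by rewrite inE /=; lia.
Qed.

Lemma preimset_relabel_eq_blk P m x B : trivIset P -> x.+2 < k ->
  (x.+1 < m) || (m.+1 < x) -> blk k x \in P -> B \in P ->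
  relabel m @^-1: B = blk k.-2 (unshift m x) -> B = blk k x.
Proof.
move=> tP hx sep bx BP e.
have hj : unshift m x < k.-2 by rewrite /unshift; case: ifP; lia.
have : Ordinal hj \in relabel m @^-1: B by rewrite e inE eqxx.
rewrite inE => jB; apply: (trivIset_block_eq tP BP bx jB).
by rewrite inE /= /shift /unshift; case: ifP; case: ifP; lia.
Qed.

Lemma shift_comm m x j : (x.+1 < m) || (m.+1 < x) ->
  shift x (shift (unshift x m) j) = shift m (shift (unshift m x) j).
Proof. by rewrite /shift /unshift; do ![case: ifP]; lia. Qed.

End BlockDeletion.

Lemma delblock_sub k (P : {set {set 'I_k}}) m x C : trivIset P -> m.+2 < k -> x.+2 < k ->
  (x.+1 < m) || (m.+1 < x) -> blk k m \in P -> blk k x \in P ->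
  C \in delblock (delblock P x) (unshift x m) ->
  C \in delblock (delblock P m) (unshift m x).
Proof.
move=> tP hm hx sep bm bx /delblockP [C1 /andP [/delblockP [B /andP [BP nBx] ->] nC1] ->].
have sep' : (m.+1 < x) || (x.+1 < m) by rewrite orbC.
have nBm : B != blk k m.
  by apply: contraNneq nC1 => ->; rewrite preimset_relabel_blk.
apply/delblockP; exists (relabel m @^-1: B).
  apply/andP; split; first by apply/delblockP; exists B; rewrite ?BP.
  apply: contra nBx => /eqP e; apply/eqP; exact: (preimset_relabel_eq_blk tP hx sep bx BP e).
apply/setP => j; rewrite !inE; congr (_ \in B); apply: val_inj => /=.
exact: shift_comm.
Qed.

Lemma delblock_comm k (P : {set {set 'I_k}}) m x : trivIset P -> m.+2 < k -> x.+2 < k ->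
  (x.+1 < m) || (m.+1 < x) -> blk k m \in P -> blk k x \in P ->
  delblock (delblock P x) (unshift x m) = delblock (delblock P m) (unshift m x).
Proof.
move=> tP hm hx sep bm bx; apply/setP => C; apply/idP/idP; first exact: delblock_sub.
by apply: delblock_sub => //; rewrite orbC.
Qed.

Section AdoptedSequences.
Variable T : eqType.

Definition natf k (g : 'I_k -> T) (x0 : T) (n : nat) : T :=
  if insub n is Some i then g i else x0.

Lemma natfE k (g : 'I_k -> T) x0 (i : 'I_k) : natf g x0 i = g i.
Proof. by rewrite /natf valK. Qed.

Lemma natfO k (g : 'I_k -> T) x0 n (h : n < k) : natf g x0 n = g (Ordinal h).
Proof. by rewrite -(natfE g x0 (Ordinal h)). Qed.

(* [drop2 g m] forgets the positions m+1, m+2, whereas [delblock P m] forgets the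
   block {m, m+1}: the two relabellings differ at position m. *)
Definition dshift (m j : nat) := if j <= m then j else j.+2.

Lemma dshift_lt k m j : j < k -> dshift m j < k.+2.
Proof. by rewrite /dshift; case: ifP; lia. Qed.

Lemma drop2E k (g : 'I_k.+2 -> T) m (j : 'I_k) (x : 'I_k.+2) :
  val x = dshift m j -> drop2 g m j = g x.
Proof.
by rewrite /drop2 /dshift => e; case: ifP => h; congr g; apply: val_inj; rewrite /= e h.
Qed.

Lemma natf_drop2 k (g : 'I_k.+2 -> T) m x0 j :
  j < k -> natf (drop2 g m) x0 j = natf g x0 (dshift m j).
Proof.
move=> hj; rewrite (natfO _ _ hj) (natfO _ _ (dshift_lt m hj)).
exact: drop2E.
Qed.

Lemma drop2_comm k (g : 'I_k.+4 -> T) m x : (x.+1 < m) || (m.+1 < x) ->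
  drop2 (drop2 g x) (unshift x m) = drop2 (drop2 g m) (unshift m x).
Proof.
move=> sep; apply: functional_extensionality => j.
have h1 := dshift_lt (unshift x m) (ltn_ord j).
have h2 := dshift_lt (unshift m x) (ltn_ord j).
rewrite (@drop2E _ _ _ _ (Ordinal h1)) // (@drop2E _ _ _ _ (Ordinal h2)) //.
rewrite (@drop2E _ _ _ _ (Ordinal (dshift_lt x h1))) //.
rewrite (@drop2E _ _ _ _ (Ordinal (dshift_lt m h2))) //.
by congr g; apply: val_inj; rewrite /= /unshift /dshift; do ![case: ifP]; lia.
Qed.

(* Condition (a) of adoptedness at the block {m, m+1}; sequences are indexed by nat
   here so that positions can be shifted without carrying bound proofs. *)
Definition adopt_at (gn : nat -> T) k m :=
  gn m = gn m.+2 /\ forall s, s < k -> s != m.+1 -> gn m.+1 != gn s.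

Lemma eq_adopt_at f f' k m : {in gtn k, f =1 f'} -> m.+2 < k ->
  adopt_at f k m -> adopt_at f' k m.
Proof.
move=> e hm [h1 h2]; split; first by rewrite -!e // inE; lia.
by move=> s hs ns; rewrite -!e ?inE //; [apply: h2 | lia].
Qed.

Lemma adopt_atP k (g : 'I_k -> T) x0 (m : 'I_k) : m.+2 < k ->
  reflect (adopt_at (natf g x0) k m)
   ([exists m2 : 'I_k, (val m2 == m.+2) && (g m == g m2)] &&
    [forall m1 : 'I_k, (val m1 == m.+1) ==>
       [forall s : 'I_k, (s != m1) ==> (g m1 != g s)]]).
Proof.
move=> hm; have hm1 : m.+1 < k by lia.
apply: (iffP andP) => [[/existsP [m2 /andP [/eqP e2 /eqP e]] /forallP h] | [ha hu]].
  split; first by rewrite natfE -e2 natfE.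
  move=> s hs ns; rewrite (natfO _ _ hm1) (natfO _ _ hs).
  have := h (Ordinal hm1); rewrite /= eqxx /= => /forallP /(_ (Ordinal hs)).
  by move/implyP; apply; apply: contra ns => /eqP [->].
split.
  apply/existsP; exists (Ordinal hm); rewrite /= eqxx /=.
  by rewrite -(natfE g x0) ha (natfO _ _ hm).
apply/forallP => m1; apply/implyP => /eqP e1; apply/forallP => s; apply/implyP => ns.
rewrite -!(natfE g x0) e1 hu //; apply: contra ns => /eqP e.
by apply/eqP/val_inj; rewrite /= e.
Qed.

Lemma adopt_at_lift gn k m x : m.+2 < k -> x.+2 < k -> (x.+1 < m) || (m.+1 < x) ->
  adopt_at gn k m -> adopt_at (fun j => gn (dshift m j)) (k - 2) (unshift m x) ->
  adopt_at gn k x.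
Proof.
move=> hm hx sep [A1 U1] [A2 U2].
have Ex1 : dshift m (unshift m x).+1 = x.+1 by rewrite /dshift /unshift; do ![case: ifP]; lia.
split.
  move: A2; rewrite /dshift /unshift; case: (ltnP x m) => h; first by rewrite !ifT //; lia.
  case: (eqVneq x m.+2) => e; first by rewrite e subn2 /= leqnn ltnNge leqnSn /= => <-.
  by rewrite !ifF; [have -> : (x - 2).+2 = x by lia | lia | lia].
move=> s hs ns; rewrite -Ex1.
case: (eqVneq s m.+1) => e1.
  rewrite Ex1 e1 eq_sym; apply: U1; lia.
case: (eqVneq s m.+2) => e2.
  have -> : gn s = gn (dshift m m) by rewrite /dshift leqnn e2 A1.
  by apply: U2; [lia | rewrite /unshift; case: ifP; lia].
have -> : s = dshift m (if s <= m then s else s - 2) by rewrite /dshift; do ![case: ifP]; lia.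
apply: U2; first by case: ifP; lia.
by move: ns; rewrite /unshift /dshift; do ![case: ifP]; lia.
Qed.

Lemma adopt_at_drop gn k m x : m.+2 < k -> x.+2 < k -> (x.+1 < m) || (m.+1 < x) ->
  adopt_at gn k m -> adopt_at gn k x ->
  adopt_at (fun j => gn (dshift x j)) (k - 2) (unshift x m).
Proof.
move=> hm hx sep [A1 U1] [A1' U1'].
have Em1 : dshift x (unshift x m).+1 = m.+1 by rewrite /dshift /unshift; do ![case: ifP]; lia.
split.
  rewrite /dshift /unshift; case: (ltnP m x) => h; first by rewrite !ifT //; lia.
  case: (eqVneq x (m - 2)) => e.
    have em : m = x.+2 by lia.
    by rewrite -e leqnn ifF; [rewrite A1' -em A1 em | lia].
  by rewrite !ifF; [have -> : (m - 2).+2 = m by lia | lia | lia].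
move=> s hs ns; rewrite Em1; apply: U1; first by rewrite /dshift; case: ifP; lia.
by move: ns; rewrite /dshift /unshift; do ![case: ifP]; lia.
Qed.

Lemma adoptedE n (P : {set {set 'I_n.+3}}) (g : 'I_n.+3 -> T) :
  adopted P g = [forall m : 'I_n.+3, ((m.+2 < n.+3) && (blk n.+3 m \in P)) ==>
     [&& [exists m2 : 'I_n.+3, (val m2 == m.+2) && (g m == g m2)],
         [forall m1 : 'I_n.+3, (val m1 == m.+1) ==>
            [forall s : 'I_n.+3, (s != m1) ==> (g m1 != g s)]]
       & adopted (delblock P m) (drop2 g m)]].
Proof. by []. Qed.

End AdoptedSequences.

(* Condition (a) at {m, m+1} together with adoptedness of the reduced sequence already
   forces adoptedness: every other block {x, x+1} of P survives in [delblock P m], and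
   deleting the two blocks in either order gives the same pair-partition and sequence. *)
Lemma adopted_delblock (T : eqType) (x0 : T) k (P : {set {set 'I_k.+2}})
    (g : 'I_k.+2 -> T) m :
  trivIset P -> m.+2 < k.+2 -> blk k.+2 m \in P -> adopt_at (natf g x0) k.+2 m ->
  adopted (delblock P m) (drop2 g m) -> adopted P g.
Proof.
elim/ltn_ind: k P g m => -[|[|k]] IH P g m tP hm bm A hred; [lia | by [] |].
rewrite (adoptedE (n := k.+1)); apply/forallP => x; apply/implyP => /andP [hx bx].
rewrite andbA; case: (eqVneq (val x) m) => [e | nxm].
  by apply/andP; split; [apply/(adopt_atP _ x0 hx); rewrite e | rewrite e].
have sep : (x.+1 < m) || (m.+1 < x) by apply: (blk_apart tP hm hx bm bx).
case: k => [|k] in IH P g tP hm bm A hred x hx bx nxm sep *; first by move: hm hx sep; lia.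
set x' := unshift m x; have hx' : x'.+2 < k.+3 by rewrite /x' /unshift; case: ifP; lia.
have Ax'P := @adopt_atP _ _ (drop2 g m) x0 (Ordinal (ltnW (ltnW hx'))) hx'.
move: hred; rewrite (adoptedE (n := k)) => /forallP /(_ (Ordinal (ltnW (ltnW hx')))).
rewrite /= hx' (@blk_delblock k.+1.+4 P m x) //; last by lia.
rewrite andbA => /implyP /(_ isT) /andP [/Ax'P Ax' hred].
have Ax : adopt_at (natf g x0) k.+1.+4 x.
  apply: adopt_at_lift hm hx sep A _; apply: eq_adopt_at Ax' => // j.
  by rewrite inE => hj; rewrite natf_drop2.
rewrite (introT (adopt_atP _ x0 hx) Ax) /=.
set m' := unshift x m; have hm' : m'.+2 < k.+3 by rewrite /m' /unshift; case: ifP; lia.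
apply: (IH k.+1 _ _ _ m') => //.
- exact: (trivIset_delblock x tP).
- by apply: (@blk_delblock k.+1.+4 P x m) => //; lia.
- apply: eq_adopt_at (adopt_at_drop hm hx sep A Ax) => // j.
  by rewrite inE => hj; rewrite natf_drop2.
- by rewrite /m' (delblock_comm tP hm hx sep bm bx) (drop2_comm g sep).
Qed.

Lemma card_le_sum_cover (A I : finType) (X : {set A}) (J : {pred I}) (S : I -> {set A}) :
  (forall x, x \in X -> exists2 t, t \in J & x \in S t) -> #|X| <= \sum_(t in J) #|S t|.
Proof.
move=> cover; apply: leq_trans (_ : #|\bigcup_(t in J) S t| <= _).
  by apply: subset_leq_card; apply/subsetP => x /cover [t tJ xS]; apply/bigcupP; exists t.
elim/big_rec2: _ => [|t s U _ hU]; first by rewrite cards0.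
by rewrite cardsU; apply: leq_trans (leq_subr _ _) _; rewrite leq_add2l.
Qed.

Lemma card_fibers (A V : finType) (X : {set A}) (f : A -> V) :
  #|X| = \sum_(v in f @: X) #|[set x in X | f x == v]|.
Proof.
rewrite -sum1_card (partition_big f (mem (f @: X))) /=; last by move=> x xX; apply: imset_f.
by apply: eq_bigr => v _; rewrite -sum1_card; apply: eq_bigl => x; rewrite inE.
Qed.

Section SequentialChoice.
Variables (A V : finType) (S : {set A}) (n : nat) (obs : nat -> A -> V) (c : nat -> nat).

Definition agree j a := [set b in S | [forall l : 'I_j, obs l b == obs l a]].

Lemma agreeP j a b l : b \in agree j a -> l < j -> obs l b = obs l a.
Proof. by rewrite inE => /andP [_ /forallP h] hl; apply/eqP; exact: (h (Ordinal hl)). Qed.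

Lemma agree_sub j a b : b \in agree j a -> b \in S.
Proof. by rewrite inE => /andP []. Qed.

Hypothesis obs_inj :
  forall a b, a \in S -> b \in S -> (forall j, j < n -> obs j a = obs j b) -> a = b.
Hypothesis obs_choices :
  forall j a, j < n -> a \in S -> #|obs j @: agree j a| <= c j.

Lemma card_agree d j a : j + d = n -> a \in S -> #|agree j a| <= \prod_(j <= l < n) c l.
Proof.
elim: d j a => [|d IH] j a e aS.
  rewrite addn0 in e; rewrite big_geq ?e //; apply: leq_trans (_ : #|[set a]| <= 1).
    apply: subset_leq_card; apply/subsetP => b bj; rewrite inE; apply/eqP.
    by apply: obs_inj (agree_sub bj) aS _ => l; apply: agreeP bj.
  by rewrite cards1.
have jn : j < n by lia.
rewrite big_ltn // (card_fibers _ (obs j)).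
apply: leq_trans (_ : \sum_(v in obs j @: agree j a) \prod_(j.+1 <= l < n) c l <= _).
  apply: leq_sum => _ /imsetP [b0 hb0 ->].
  apply: leq_trans (IH j.+1 b0 _ (agree_sub hb0)); last by lia.
  apply: subset_leq_card; apply/subsetP => b.
  rewrite !inE => /andP [/andP [bS /forallP hb] ej].
  rewrite bS; apply/forallP => l; case: (ltnP l j) => hl.
    by rewrite (eqP (hb (Ordinal hl))) (agreeP hb0 hl).
  by have -> : (l : nat) = j by have := ltn_ord l; lia.
by rewrite sum_nat_const leq_mul2r obs_choices ?orbT.
Qed.

Lemma card_le_prod_choices : #|S| <= \prod_(j < n) c j.
Proof.
case: (set_0Vmem S) => [-> | [a aS]]; first by rewrite cards0.
rewrite -(big_mkord xpredT); apply: leq_trans (card_agree (j := 0) _ aS) => //.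
by apply: subset_leq_card; apply/subsetP => b bS; rewrite inE bS; apply/forallP => -[].
Qed.

End SequentialChoice.

Lemma modn_lt_double x k : x < k + k -> x %% k = if x < k then x else x - k.
Proof.
move=> h; case: ifP => h1; first by rewrite modn_small.
by rewrite -[in LHS](subnK (_ : k <= x)) ?modnDr ?modn_small //; lia.
Qed.

Section Counting.
Variable sim : forall N : nat, rel ('I_N * 'I_N).
Arguments sim : clear implicits.
Variables N n : nat.
Local Notation k := n.+4.
Variable P : {set {set 'I_k}}.
Hypothesis P_pair : pair_partition P.
Variable m : nat.
Hypothesis m_lt : m.+2 < k.
Hypothesis blk_m : blk k m \in P.
Variable B : nat.
Hypothesis C2 : forall p q r : 'I_N, #|[set s | sim N (p, q) (r, s)]| <= B.

Local Notation E := (Eset sim N P).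

Lemma Eset_sim (i : {ffun 'I_k -> 'I_N}) (l l' : 'I_k) (C : {set 'I_k}) :
  i \in E -> C \in P -> l \in C -> l' \in C -> sim N (i l, i (ordS l)) (i l', i (ordS l')).
Proof.
rewrite inE => /forallP /(_ l) /forallP /(_ l') /eqP <- CP lC l'C.
by apply/existsP; exists C; rewrite CP lC l'C.
Qed.

Lemma cover_P : cover P = setT.
Proof. by case/andP: P_pair => /andP [/eqP -> _] _. Qed.

Lemma trivIset_P : trivIset P.
Proof. by case/andP: P_pair => /andP [_ /andP [-> _]] _. Qed.

Lemma card_P : #|P| = k./2.
Proof.
have e := card_partition (andP P_pair).1; rewrite cardsT card_ord in e.
rewrite (eq_bigr (fun _ => 2)) ?sum_nat_const in e; first by rewrite [in RHS]e muln2 doubleK.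
by move=> C CP; case/andP: P_pair => _ /forallP /(_ C) /implyP /(_ CP) /eqP.
Qed.

(* Sequences are counted by reading their entries cyclically from position m+2:
   step j visits position m+2+j (mod k), so that i_m and i_{m+1} are read last. *)
Definition walk j : 'I_k := Ordinal (ltn_pmod (m.+2 + j) (isT : 0 < k)).

Lemma walk_val j : j < k ->
  nat_of_ord (walk j) = if m.+2 + j < k then m.+2 + j else m.+2 + j - k.
Proof. by move=> hj; rewrite /= modn_lt_double //; lia. Qed.

Lemma ordS_walk j : ordS (walk j) = walk j.+1.
Proof. by apply: val_inj; rewrite /= -addn1 modnDml addn1 addnS. Qed.

Lemma walk_surj (x : 'I_k) : exists2 j, j < k & walk j = x.
Proof.
have hx := ltn_ord x.
exists (if m.+2 <= x then x - m.+2 else x + k - m.+2); first by case: (leqP m.+2 x); lia.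
by apply: ord_inj; case: (leqP m.+2 x) => h; rewrite walk_val; try case: ifP; lia.
Qed.

Lemma walk_mid j : j <= n.+1 -> (nat_of_ord (walk j) != m) && (nat_of_ord (walk j) != m.+1).
Proof. by move=> hj; rewrite walk_val; [case: ifP | ]; lia. Qed.

Definition pos_m : 'I_k := Ordinal (ltnW (ltnW m_lt)).
Definition pos_m1 : 'I_k := Ordinal (ltnW m_lt).
Definition pos_m2 : 'I_k := Ordinal m_lt.

Lemma walk0 : walk 0 = pos_m2.
Proof. by apply: ord_inj; rewrite walk_val // /=; case: ifP; lia. Qed.

Lemma walk_last : walk n.+3 = pos_m1.
Proof. by apply: ord_inj; rewrite walk_val // /=; case: ifP; lia. Qed.

Lemma ordS_pos_m : ordS pos_m = pos_m1.
Proof. by apply: val_inj => /=; rewrite modn_small //; lia. Qed.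

Lemma ordS_pos_m1 : ordS pos_m1 = pos_m2.
Proof. by apply: val_inj => /=; rewrite modn_small //; lia. Qed.

(* Step j is paired when the edge walked just before it lies in the block of an edge
   walked earlier, whose two end points are then already known; C2 leaves at most B
   choices for the entry visited at step j. *)
Definition paired_step (j : nat) := [exists t : 'I_k, (t.+2 <= j) &&
   [exists C in P, (walk t \in C) && (walk j.-1 \in C)]].

Definition free_step : pred 'I_k := fun j => [&& 0 < j, j <= n.+2 & ~~ paired_step j].

Local Notation prefix_class S := (agree S (fun j (b : {ffun 'I_k -> 'I_N}) => b (walk j))).

Lemma prefix_classP S j a b l :
  b \in prefix_class S j a -> l < j -> b (walk l) = a (walk l).
Proof. exact: agreeP. Qed.

Lemma card_step (S : {set {ffun 'I_k -> 'I_N}}) j a : S \subset E -> 0 < j -> j < k ->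
  #|[set (b : {ffun _ -> _}) (walk j) | b in prefix_class S j a]|
    <= if paired_step j then B else N.
Proof.
move=> sS j0 jk; case: ifP => [/existsP [t /andP [ht /existsP [C /and3P [CP tC jC]]]] | _];
  last by apply: leq_trans (max_card _) _; rewrite card_ord.
apply: leq_trans (C2 (a (walk t)) (a (walk t.+1)) (a (walk j.-1))).
apply: subset_leq_card; apply/subsetP => _ /imsetP [b hb ->]; rewrite inE.
have := Eset_sim (subsetP sS _ (agree_sub hb)) CP tC jC; rewrite !ordS_walk prednK //.
rewrite (prefix_classP hb (l := t)) ?(prefix_classP hb (l := t.+1)) //; try lia.
by rewrite (prefix_classP hb (l := j.-1)) //; lia.
Qed.

(* The block of the edge walked just before a free step is new; so free steps
   inject into the blocks of P other than {m, m+1}, whose edge is walked last. *)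
Lemma card_free_steps : #|free_step| <= k./2 - 1.
Proof.
pose blk_before (j : 'I_k) := pblock P (walk j.-1).
have walk_blk j : walk j \in pblock P (walk j) by rewrite mem_pblock cover_P inE.
have blkP j : blk_before j \in P by apply: pblock_mem; rewrite cover_P inE.
have lt_free (j1 j2 : 'I_k) : free_step j1 -> free_step j2 -> j1 < j2 ->
    blk_before j1 != blk_before j2.
  move=> /and3P [j1_0 _ _] /and3P [_ _ /negP np2] lt12; apply/eqP => e; apply: np2.
  have ht : j1.-1 < k by have := ltn_ord j1; lia.
  apply/existsP; exists (Ordinal ht); rewrite /=; apply/andP; split; first lia.
  by apply/existsP; exists (blk_before j2); rewrite blkP -{1}e !walk_blk.
have inj : {in free_step &, injective blk_before}.
  move=> j1 j2 f1 f2 e; case: (ltngtP j1 j2) => h; last exact: val_inj.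
    by case/eqP: (lt_free _ _ f1 f2 h).
  by case/eqP: (lt_free _ _ f2 f1 h).
rewrite -(card_in_image inj); apply: leq_trans (_ : #|P :\ blk k m| <= _); last first.
  by move: (cardsD1 (blk k m) P); rewrite blk_m card_P add1n => ->; rewrite subn1.
apply: subset_leq_card; apply/subsetP => C /mapP [j]; rewrite mem_enum => fj ->.
rewrite !inE blkP andbT; apply/eqP => e.
have := walk_blk j.-1; rewrite -/(blk_before j) e inE.
have /walk_mid /andP [/negPf -> /negPf ->] // : j.-1 <= n.+1 by case/and3P: fj; lia.
Qed.

Definition step_choices c0 (j : nat) :=
  if j == n.+3 then 1 else if j == 0 then c0 else if paired_step j then B else N.

Lemma prod_step_choices c0 :
  \prod_(j < k) step_choices c0 j <= c0 * N ^ #|free_step| * B.+1 ^ k.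
Proof.
apply: leq_trans (_ : \prod_(j < k)
    (if free_step j then N else if j == 0 :> nat then c0 else B.+1) <= _).
  apply: leq_prod => j _; rewrite /step_choices /free_step.
  case: (eqVneq (j : nat) n.+3) => [-> | e3]; first by rewrite ltnn andbF.
  case: (eqVneq (j : nat) 0) => [-> // | e0].
  have jn : j <= n.+2 by have := ltn_ord j; lia.
  by rewrite lt0n e0 jn /=; case: paired_step => /=.
rewrite (bigID free_step) /= (eq_bigr (fun _ => N)); last by move=> j ->.
rewrite prod_nat_const -mulnA mulnCA leq_mul // (bigD1 ord0) //= leq_mul //.
rewrite (eq_bigr (fun _ => B.+1)); last first.
  by move=> j /andP [/negPf -> nz]; case: eqP => // j0; case/eqP: nz; apply: val_inj.
rewrite prod_nat_const leq_pexp2l //.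
by apply: leq_trans (max_card _) _; rewrite card_ord.
Qed.

Lemma card_walk_le (S : {set {ffun 'I_k -> 'I_N}}) c0 : S \subset E ->
  (forall a, a \in S ->
     #|[set (b : {ffun _ -> _}) (walk 0) | b in prefix_class S 0 a]| <= c0) ->
  (forall a, a \in S ->
     #|[set (b : {ffun _ -> _}) (walk n.+3) | b in prefix_class S n.+3 a]| <= 1) ->
  #|S| <= c0 * N ^ (k./2 - 1) * B.+1 ^ k.
Proof.
move=> sS first_step last_step.
case: (posnP N) => [N0 | N_gt0].
  suff -> : S = set0 by rewrite cards0.
  by apply/setP => a; have := ltn_ord (a ord0); lia.
apply: leq_trans (_ : c0 * N ^ #|free_step| * B.+1 ^ k <= _); last first.
  by rewrite leq_mul2r leq_mul2l leq_pexp2l ?card_free_steps ?orbT.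
apply: leq_trans (prod_step_choices c0).
apply: (card_le_prod_choices (obs := fun j (b : {ffun 'I_k -> 'I_N}) => b (walk j))).
  by move=> a b aS bS e; apply/ffunP => x; have [j hj <-] := walk_surj x; exact: e j hj.
move=> j a hj aS; rewrite /step_choices.
case: (eqVneq j n.+3) => [-> | e3]; first exact: last_step.
case: (eqVneq j 0) => [-> | e0]; first exact: first_step.
by apply: card_step => //; lia.
Qed.

Definition Erepeat := [set i in E | [exists s, (s != pos_m1) && (i pos_m1 == i s)]].

Lemma card_Erepeat : #|Erepeat| <= k * (N * N ^ (k./2 - 1) * B.+1 ^ k).
Proof.
pose S s := [set i in E | i pos_m1 == i s].
apply: leq_trans (_ : \sum_(s in [pred s | s != pos_m1]) #|S s| <= _).
  apply: card_le_sum_cover => i; rewrite inE => /andP [iE /existsP [s /andP [ns e]]].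
  by exists s => //; rewrite inE iE.
apply: leq_trans
  (_ : \sum_(s in [pred s : 'I_k | s != pos_m1]) (N * N ^ (k./2 - 1) * B.+1 ^ k) <= _).
  apply: leq_sum => s ns; apply: card_walk_le.
  - by apply/subsetP => i; rewrite inE => /andP [].
  - by move=> a _; apply: leq_trans (max_card _) _; rewrite card_ord.
  move=> a aS; apply: leq_trans (_ : #|[set a s]| <= 1); last by rewrite cards1.
  apply: subset_leq_card; apply/subsetP => _ /imsetP [b hb ->].
  have [t ht ts] := walk_surj s.
  have tn : t != n.+3 by apply: contra ns => /eqP tn; rewrite -ts tn walk_last.
  move: (agree_sub hb); rewrite inE walk_last /S inE => /andP [_ /eqP ->].
  by rewrite -ts (prefix_classP hb) //; lia.
rewrite sum_nat_const leq_mul2r; apply/orP; right.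
by apply: leq_trans (max_card _) _; rewrite card_ord.
Qed.

Definition C3 := [set t : 'I_N * 'I_N * 'I_N |
   sim N (t.1.1, t.1.2) (t.1.2, t.2) && (t.2 != t.1.1)].

Definition Egap := [set i in E | i pos_m != i pos_m2].

(* On Egap the triple (i_m, i_{m+1}, i_{m+2}) lies in C3: it fixes the first and the
   last step of the walk. *)
Lemma card_Egap : #|Egap| <= #|C3| * (1 * N ^ (k./2 - 1) * B.+1 ^ k).
Proof.
pose S t := [set i in E | (i pos_m, i pos_m1, i pos_m2) == t].
have SP b t : b \in S t -> (b pos_m, b pos_m1, b pos_m2) = t.
  by rewrite inE => /andP [_ /eqP].
apply: leq_trans (_ : \sum_(t in C3) #|S t| <= _).
  apply: card_le_sum_cover => i; rewrite inE => /andP [iE ne].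
  exists (i pos_m, i pos_m1, i pos_m2); last by rewrite inE iE eqxx.
  rewrite inE /= eq_sym ne andbT.
  have := Eset_sim iE blk_m (_ : pos_m \in blk k m) (_ : pos_m1 \in blk k m).
  by rewrite ordS_pos_m ordS_pos_m1; apply; rewrite inE eqxx ?orbT.
rewrite -sum_nat_const; apply: leq_sum => t _; apply: card_walk_le.
- by apply/subsetP => i; rewrite inE => /andP [].
- move=> a _; apply: leq_trans (_ : #|[set t.2]| <= 1); last by rewrite cards1.
  apply: subset_leq_card; apply/subsetP => _ /imsetP [b hb ->].
  by rewrite inE walk0 -(SP b _ (agree_sub hb)).
- move=> a _; apply: leq_trans (_ : #|[set t.1.2]| <= 1); last by rewrite cards1.
  apply: subset_leq_card; apply/subsetP => _ /imsetP [b hb ->].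
  by rewrite inE walk_last -(SP b _ (agree_sub hb)).
Qed.

Lemma drop2_edge (T : eqType) (g : 'I_k -> T) (l : 'I_n.+2) : g pos_m = g pos_m2 ->
  drop2 g m l = g (@relabel k m l) /\ drop2 g m (ordS l) = g (ordS (@relabel k m l)).
Proof.
move=> e; have hl := ltn_ord l; split.
  case: (eqVneq (l : nat) m) => el.
    rewrite (@drop2E _ _ _ _ _ pos_m); last by rewrite /dshift /= el leqnn.
    by rewrite e; congr g; apply: val_inj; rewrite /= /shift el ltnn.
  by apply: drop2E; rewrite /= /shift /dshift; do ![case: ifP]; lia.
apply: drop2E => /=.
rewrite (modn_lt_double (x := _.+1)); last by rewrite /shift; case: ifP; lia.
by rewrite (modn_lt_double (x := l.+1)) ?/shift ?/dshift; do ?[case: ifP]; lia.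
Qed.

Lemma delblock_pairs (l l' : 'I_n.+2) :
  [exists C in delblock P m, (l \in C) && (l' \in C)] =
  [exists C in P, (@relabel k m l \in C) && (@relabel k m l' \in C)].
Proof.
apply/existsP/existsP => [[_ /andP [/delblockP [C /andP [CP _] ->]]] | [C /andP [CP lC]]].
  by rewrite !inE => lC; exists C; rewrite CP.
exists (@relabel k m @^-1: C); rewrite !inE lC andbT; apply/delblockP; exists C => //.
rewrite CP; apply: contraTneq lC => ->; rewrite inE /= /shift negb_and.
by have := ltn_ord l; case: ifP; lia.
Qed.

Lemma drop2_Eset (i : {ffun 'I_k -> 'I_N}) : i \in E -> i pos_m = i pos_m2 ->
  [ffun j => drop2 i m j] \in Eset sim N (delblock P m).
Proof.
move=> iE e; rewrite inE; apply/forallP => l; apply/forallP => l'.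
rewrite !ffunE delblock_pairs.
have [-> ->] := drop2_edge l e; have [-> ->] := drop2_edge l' e.
by move: iE; rewrite inE => /forallP /(_ (@relabel k m l)) /forallP /(_ (@relabel k m l')).
Qed.

Lemma drop2_recover (x : 'I_k) : x != pos_m1 -> exists j : 'I_n.+2,
  forall (T : eqType) (g : 'I_k -> T), g pos_m = g pos_m2 -> drop2 g m j = g x.
Proof.
move=> nx; have hx := ltn_ord x.
have nx1 : (x : nat) != m.+1 by apply: contra nx => /eqP ex; apply/eqP/val_inj.
case: (eqVneq (x : nat) m.+2) => ex.
  have hj : m < n.+2 by lia.
  exists (Ordinal hj) => T g e.
  rewrite (@drop2E _ _ _ _ _ pos_m); last by rewrite /dshift /= leqnn.
  by rewrite e; congr g; apply: ord_inj; rewrite ex.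
have hj : (if x <= m then x : nat else x - 2) < n.+2 by case: ifP; lia.
by exists (Ordinal hj) => T g _; apply: drop2E => /=; rewrite /dshift; do ![case: ifP]; lia.
Qed.

Definition Ereduced := [set i in E | [&& i pos_m == i pos_m2,
   [forall s, (s != pos_m1) ==> (i pos_m1 != i s)] &
   ~~ adopted (delblock P m) (drop2 i m)]].

Lemma card_Ereduced : #|Ereduced| <= #|Ebar sim N (delblock P m)| * N.
Proof.
pose phi (i : {ffun 'I_k -> 'I_N}) := ([ffun j => drop2 i m j], i pos_m1).
have EredP i : i \in Ereduced ->
    [/\ i \in E, i pos_m = i pos_m2 & ~~ adopted (delblock P m) (drop2 i m)].
  by rewrite inE => /andP [iE /and3P [/eqP e _ na]].
have inj : {in Ereduced &, injective phi}.
  move=> i i' /EredP [_ e _] /EredP [_ e' _] [e1 e2]; apply/ffunP => x.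
  case: (eqVneq x pos_m1) => [-> // | nx].
  have [j hj] := drop2_recover nx.
  rewrite -(hj _ i e) -(hj _ i' e').
  by have := congr1 (fun f : {ffun _ -> _} => f j) e1; rewrite !ffunE.
rewrite -(card_in_imset inj) -[N in _ * N]card_ord -cardsT -cardsX.
apply: subset_leq_card; apply/subsetP => _ /imsetP [i /EredP [iE e na] ->].
rewrite in_setX in_setT andbT inE drop2_Eset //.
suff -> : [eta [ffun j => drop2 i m j]] = drop2 i m by [].
by apply: functional_extensionality => l; rewrite ffunE.
Qed.

Lemma card_Ebar_le_sum : #|Ebar sim N P| <= #|Erepeat| + #|Egap| + #|Ereduced|.
Proof.
apply: leq_trans (_ : #|Erepeat :|: Egap :|: Ereduced| <= _); last first.
  by rewrite !cardsU; apply: leq_trans (leq_subr _ _) _; rewrite leq_add2r leq_subr.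
apply: subset_leq_card; apply/subsetP => i; rewrite inE => /andP [iE na].
have inE_E (C : pred {ffun 'I_k -> 'I_N}) : (i \in [set j in E | C j]) = C i by rewrite inE iE.
rewrite !in_setU !inE_E -orbA; apply/orP.
case: (boolP [exists s, _]) => [rep | uniq]; [by left | right; apply/orP].
case: (eqVneq (i pos_m) (i pos_m2)) => [e | ne]; [right | by left].
apply/and3P; split => //.
  apply/forallP => s; apply/implyP => ns; apply: contra uniq => /eqP es.
  by apply/existsP; exists s; rewrite ns es eqxx.
apply: contra na => ad.
apply: (@adopted_delblock _ (i pos_m) n.+2 P [eta i] m trivIset_P m_lt blk_m _ ad).
split; first by rewrite (natfO _ _ (ltnW (ltnW m_lt))) (natfO _ _ m_lt).
move=> s hs ns; rewrite (natfO _ _ (ltnW m_lt)) (natfO _ _ hs).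
by apply: contra uniq => /eqP es; apply/existsP; exists (Ordinal hs); rewrite es eqxx andbT.
Qed.

Lemma card_Ebar_le : #|Ebar sim N P| <=
  N * #|Ebar sim N (delblock P m)| + (k * N + #|C3|) * B.+1 ^ k * N ^ (k./2 - 1).
Proof.
apply: (leq_trans card_Ebar_le_sum); rewrite addnC.
apply: leq_add; first by rewrite mulnC card_Ereduced.
apply: leq_trans (leq_add card_Erepeat card_Egap) _.
by apply: eq_leq; ring.
Qed.

End Counting.

Section LittleO.
Local Open Scope ring_scope.
Implicit Types f g w : nat -> rat.

Lemma littleoD f1 f2 g : littleo f1 g -> littleo f2 g -> littleo (fun N => f1 N + f2 N) g.
Proof.
move=> o1 o2 eps eps0; have eps20 : 0 < eps / 2 by rewrite divr_gt0.
have [N1 h1] := o1 _ eps20; have [N2 h2] := o2 _ eps20.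
exists (maxn N1 N2) => N; rewrite geq_max => /andP [/h1 b1 /h2 b2].
by apply: (le_trans (ler_normD _ _)); lra.
Qed.

Lemma littleoZ (c : rat) f g : (forall N, 0 <= g N) -> littleo f g ->
  littleo (fun N => c * f N) g.
Proof.
move=> g0 o eps eps0; have c1 : 0 < `|c| + 1 by rewrite ltr_wpDl.
have [N0 h] := o _ (divr_gt0 eps0 c1); exists N0 => N /h b.
rewrite normrM; apply: (le_trans (ler_wpM2l (normr_ge0 c) b)).
rewrite mulrA ler_wpM2r // mulrCA -[X in _ <= X]mulr1 ler_wpM2l ?(ltW eps0) //.
by rewrite ler_pdivrMr // mul1r lerDl.
Qed.

Lemma littleoM f g w : (forall N, 0 <= w N) -> littleo f g ->
  littleo (fun N => f N * w N) (fun N => g N * w N).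
Proof.
move=> w0 o eps eps0; have [N0 h] := o _ eps0; exists N0 => N /h b.
by rewrite normrM (ger0_norm (w0 N)) mulrA ler_wpM2r.
Qed.

Lemma littleo_id_sqr : littleo (fun N => N%:R) (fun N => N%:R ^+ 2).
Proof.
move=> eps eps0; exists (Num.Def.archi_bound eps^-1) => N hN.
have ltN : eps^-1 <= N%:R.
  apply/ltW/(lt_le_trans (archi_boundP _)); first by rewrite invr_ge0 ltW.
  by rewrite ler_nat.
have one_le : 1 <= eps * N%:R by have := ler_wpM2l (ltW eps0) ltN; rewrite mulfV ?gt_eqF.
by rewrite ger0_norm // expr2 mulrA -[X in X <= _]mul1r ler_wpM2r.
Qed.

End LittleO.

Theorem mainTheorem6
  (sim : forall N : nat, rel ('I_N * 'I_N))
  (Hequiv : forall N : nat,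
     [/\ reflexive (sim N), symmetric (sim N) & transitive (sim N)])
  (Hflip : forall (N : nat) (p q : 'I_N), sim N (p, q) (q, p))
  (HC2 : exists B : nat, forall (N : nat) (p q r : 'I_N),
     #|[set s : 'I_N | sim N (p, q) (r, s)]| <= B)
  (HC3 : littleo
     (fun N => (#|[set t : 'I_N * 'I_N * 'I_N |
                   sim N (t.1.1, t.1.2) (t.1.2, t.2) && (t.2 != t.1.1)]|%:R)%R)
     (fun N => ((N%:R : rat) ^+ 2)%R))
  (k : nat) (Hk4 : 4 <= k) (Hkev : ~~ odd k)
  (P : {set {set 'I_k}}) (HP : NCpair P)
  (m : nat) (Hm : m.+2 < k) (Hblk : blk k m \in P) :
  exists err : nat -> rat,
    littleo err (fun N => ((N%:R : rat) ^+ (1 + k./2))%R) /\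
    forall N : nat,
      ((#|Ebar sim N P|%:R : rat)
        <= (N%:R : rat) * #|Ebar sim N (delblock P m)|%:R + err N)%R.
Proof.
have [B C2] := HC2.
case: k => [|[|[|[|n]]]] // in Hk4 Hkev P HP Hm Hblk *.
have P_pair : pair_partition P by case/andP: HP.
pose h := (n.+4)./2 - 1; pose D : rat := (B.+1 ^ n.+4)%:R%R.
exists (fun N => D * ((n.+4)%:R * N%:R + #|C3 sim N|%:R) * N%:R ^+ h)%R; split => [|N].
  have -> : 1 + (n.+4)./2 = 2 + h by rewrite /h /=; lia.
  have -> : (fun N => (N%:R : rat) ^+ (2 + h))%R = (fun N => N%:R ^+ 2 * N%:R ^+ h)%R.
    by apply: functional_extensionality => N; rewrite exprD.
  apply: littleoM => [N | ]; first exact: exprn_ge0.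
  apply: littleoZ => [N | ]; first exact: exprn_ge0.
  apply: littleoD HC3; apply: littleoZ littleo_id_sqr => N; exact: exprn_ge0.
have := card_Ebar_le P_pair Hm Hblk (C2 N); rewrite -(ler_nat rat).
rewrite /D !(natrD, natrM, natrX) => /le_trans; apply.
by rewrite le_eqVlt; apply/orP; left; apply/eqP; ring.
Qed.
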